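(* In the setting of the context, let $\hat V\in C^{0,\alpha}(\Sigma,\mathbb{R})$ be strictly positive, let $c\neq0$ be the unique real with $P(-c\hat V)=0$, set $V=|c|\hat V$, and for $y\ge1$ let $$\pi(y)=\sum_{\tau:\ e^{V(\tau)}\le y}\mathrm{tr}({}^t\Psi_\tau),$$ the sum over periodic orbits $\tau$ of $\sigma$. Then for every $\gamma'>1$, $\limsup_{y\to+\infty}\frac{\pi(y)}{y^{\gamma'}}<+\infty$.
   Context: $\Sigma=\{1,\dots,t\}^{\mathbb{N}}$ with the metric $d_\gamma$ (fixed $\gamma\in(0,1)$, $d_\gamma(x,y)=\inf\{\gamma^{k+1}:x_j=y_j,\ j\le k\}$), $\sigma$ the shift, $ix=(i,x_0,x_1,\dots)$. $\psi_1,\dots,\psi_t$ are affine bijections of $\mathbb{R}^d$ with $\max\mathrm{Lip}(\psi_i)<1$; $q\in\{1,\dots,d\}$; $(D\psi_i)_*$ the pull-back on $\Lambda^q(\mathbb{R}^d)$; $M^q$ the self-adjoint operators on $\Lambda^q$; $\Psi_i(A)={}^t(D\psi_i)_*A(D\psi_i)_*$, ${}^t\Psi_i(A)=(D\psi_i)_*A\,{}^t(D\psi_i)_*$. Assume $(ND_q)$: there is $\gamma'' >0$ with, for all $c,e\in\Lambda^q$, some $i$ satisfying $|((D\psi_i)_*c,e)|\ge\gamma''\|c\|\|e\|$. For $W\in C^{0,\alpha}(\Sigma,\mathbb{R})$, $\beta_W>0$ is the unique eigenvalue of $(\mathcal{L}_WA)(x)=\sum_ie^{W(ix)}\Psi_i(A(ix))$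 admitting an eigenfunction in $C(\Sigma,M^q)$ positive definite at every point, and $P(W)=\log\beta_W$. A periodic orbit $\tau$ is $\{x,\sigma(x),\dots,\sigma^{n-1}(x)\}$ with $n$ the minimal period of $x$; $V(\tau)=\sum_{j=0}^{n-1}V(\sigma^j(x))$ and $\mathrm{tr}({}^t\Psi_\tau)=\mathrm{tr}({}^t\Psi_{x_0}\circ\dots\circ{}^t\Psi_{x_{n-1}})$, both independent of the choice of $x\in\tau$. *)

From HB Require Import structures.
From mathcomp Require Import all_boot all_order all_algebra.
From mathcomp Require Import all_classical all_reals all_analysis.
Set Implicit Arguments. Unset Strict Implicit. Unset Printing Implicit Defensive.
Import Order.TTheory GRing.Theory Num.Theory.
Local Open Scope ring_scope.
Local Open Scope classical_set_scope.

Section Defs.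
Variable R : realType.

Definition Sig (t : nat) := nat -> 'I_t.
Definition shift t (x : Sig t) : Sig t := fun n => x n.+1.
Definition scons t (i : 'I_t) (x : Sig t) : Sig t :=
  fun n => match n with 0%N => i | m.+1 => x m end.

(* x and y agree on the first n coordinates, i.e. d_gamma(x,y) <= gamma^n *)
Definition agree t (n : nat) (x y : Sig t) := forall j, (j < n)%N -> x j = y j.

(* W in C^{0,alpha}(Sigma, R) for the metric d_gamma
   (d_gamma(x,y) = gamma^n where n is the first index with x_n <> y_n). *)
Definition holder t (gam alpha : R) (W : Sig t -> R) :=
  exists K : R, forall (n : nat) (x y : Sig t), agree n x y ->
    `|W x - W y| <= K * (gam ^+ n) `^ alpha.

Definition enorm d (v : 'cV[R]_d) : R := Num.sqrt (\sum_(j < d) v j 0 ^+ 2).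
Definition dotv n (u v : 'cV[R]_n) : R := (u^T *m v) 0 0.

Definition affine_bij d (f : 'cV[R]_d -> 'cV[R]_d) :=
  exists (L : 'M[R]_d) (b : 'cV[R]_d), L \in unitmx /\ forall v, f v = L *m v + b.

(* matrix of the linear part D f of an affine map f *)
Definition Dmat d (f : 'cV[R]_d -> 'cV[R]_d) : 'M[R]_d :=
  \matrix_(j, k) (f (delta_mx k 0) - f 0) j 0.

(* Basis dx_I of Lambda^q(R^d), I = (I_0 < ... < I_{q-1}) strictly increasing;
   this basis is orthonormal for the inner product induced by R^d. *)
Definition incr d q (f : {ffun 'I_q -> 'I_d}) : bool :=
  [forall a : 'I_q, forall b : 'I_q, (a < b)%N ==> (f a < f b)%N].
Definition Kq d q := {f : {ffun 'I_q -> 'I_d} | incr f}.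
Definition dimL d q := #|{: Kq d q}|.
Definition kb d q (i : 'I_(dimL d q)) : Kq d q := enum_val i.

(* Matrix (in the basis dx_I) of the pull-back L_* on Lambda^q of a linear
   map L of R^d:  L_* dx_I = \sum_J det(L[I,J]) dx_J. *)
Definition pullmx d q (L : 'M[R]_d) : 'M[R]_(dimL d q) :=
  \matrix_(J, I) \det (\matrix_(a < q, b < q) L (val (kb I) a) (val (kb J) b)).

Definition symmx n (A : 'M[R]_n) := A^T = A.
Definition posdef n (A : 'M[R]_n) :=
  symmx A /\ forall v : 'cV[R]_n, v != 0 -> 0 < dotv v (A *m v).

(* continuity of A : Sigma -> M^q (product topology) *)
Definition contS t n (A : Sig t -> 'M[R]_n) :=
  forall (x : Sig t) (eps : R), 0 < eps -> exists m : nat, forall y, agree m x y ->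
    forall a b, `|A y a b - A x a b| < eps.

(* The transfer operator L_W (A)(x) = sum_i e^{W(ix)} Psi_i(A(ix)),
   Psi_i(A) = ^t P_i A P_i with P_i the matrix of (D psi_i)_* . *)
Definition transfer t d q (psi : 'I_t -> 'cV[R]_d -> 'cV[R]_d) (W : Sig t -> R)
    (A : Sig t -> 'M[R]_(dimL d q)) : Sig t -> 'M[R]_(dimL d q) :=
  fun x => \sum_(i < t) expR (W (scons i x)) *:
      ((@pullmx d q (Dmat (psi i)))^T *m A (scons i x) *m @pullmx d q (Dmat (psi i))).

Definition pos_eigen t d q psi (W : Sig t -> R) (beta : R) :=
  exists A : Sig t -> 'M[R]_(dimL d q), contS A /\ (forall x, posdef (A x)) /\
    forall x, @transfer t d q psi W A x = beta *: A x.

(* P(W) = p, i.e. beta_W = e^p (beta_W being the unique such eigenvalue). *)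
Definition pressure_is t d q psi (W : Sig t -> R) (p : R) :=
  @pos_eigen t d q psi W (expR p).

Definition perpt t n (w : {ffun 'I_n.+1 -> 'I_t}) : Sig t :=
  fun k => w (inord (k %% n.+1)).
Definition minper t (n : nat) (x : Sig t) : Prop :=
  (0 < n)%N /\ iter n (@shift t) x = x /\
  forall m, (0 < m < n)%N -> iter m (@shift t) x <> x.
Definition birk t (V : Sig t -> R) n (x : Sig t) : R :=
  \sum_(j < n) V (iter j (@shift t) x).

Definition tPsi t d q (psi : 'I_t -> 'cV[R]_d -> 'cV[R]_d) (i : 'I_t)
    (A : 'M[R]_(dimL d q)) : 'M[R]_(dimL d q) :=
  @pullmx d q (Dmat (psi i)) *m A *m (@pullmx d q (Dmat (psi i)))^T.
Definition tPsi_word t d q psi (s : seq 'I_t) :=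
  foldr (fun i f => @tPsi t d q psi i \o f) id s.

(* trace of a linear operator T on the space M^q of self-adjoint operators,
   computed in the basis S_ab (a <= b): S_aa = E_aa, S_ab = E_ab + E_ba;
   the coordinate of a symmetric M on S_ab is M a b. *)
Definition Sbasis n (a b : 'I_n) : 'M[R]_n :=
  if a == b then delta_mx a a else delta_mx a b + delta_mx b a.
Definition trM n (T : 'M[R]_n -> 'M[R]_n) : R :=
  \sum_(a < n) \sum_(b < n | (a <= b)%N) T (Sbasis a b) a b.

(* contribution of the periodic orbits of minimal period n.+1: each such orbit
   has exactly n.+1 points, each of the form w^infinity for a word w. *)
Definition orbit_term t d q psi (V : Sig t -> R) (y : R) (n : nat) : R :=
  n.+1%:R^-1 * \sum_(w : {ffun 'I_n.+1 -> 'I_t} |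
      `[< minper n.+1 (perpt w) >] && (expR (birk V n.+1 (perpt w)) <= y))
    trM (@tPsi_word t d q psi [seq w k | k <- enum 'I_n.+1]).

Definition piV t d q psi (V : Sig t -> R) (y : R) : R :=
  \sum_(n \in [set: nat]) @orbit_term t d q psi V y n.

End Defs.

(* The positive eigenfunction A of L_{-c V^} (eigenvalue e^0 = 1) is continuous
   on the compact space Sigma, hence bounded by some b and uniformly positive
   definite, A(x) >= a.  Iterating A = L^n A and taking traces gives, for every x,
       sum_{|w| = n} e^{-c S_n V^(wx)} |Psi_w|^2 <= N b / a,
   where Psi_w is the product of the pull-backs along w and N = dim Lambda^q.
   A periodic orbit of period n is w^oo for a word w; since V^ is Hoelder,
   S_n V^(w^oo) and S_n V^(wx) differ by at most a constant D, so an orbit with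
   e^{V(tau)} <= y contributes at most 2 N^2 e^{|c| D} y e^{-c S_n V^(wx)} |Psi_w|^2
   to pi(y): all orbits of period n together contribute O(y).  As V^ >= m0 > 0,
   only periods n <= log y / (|c| m0) occur, so pi(y) = O(y log y) = O(y^gam'). *)

From Pilot Require Import Defs.
From HB Require Import structures.
From mathcomp Require Import all_boot all_order all_algebra.
From mathcomp Require Import all_classical all_reals all_analysis.
From mathcomp Require Import ring lra.
Import Order.TTheory GRing.Theory Num.Theory numFieldNormedType.Exports.
Local Open Scope ring_scope.
Local Open Scope classical_set_scope.

Set Implicit Arguments. Unset Strict Implicit. Unset Printing Implicit Defensive.

Section Cylinders.
Variable t : nat.
Implicit Types (x y z : Sig t) (m n : nat).

Lemma agree_trans n x y z : agree n x y -> agree n y z -> agree n x z.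
Proof. by move=> xy yz j lt_jn; rewrite xy // yz. Qed.

Lemma agree_sym n x y : agree n x y -> agree n y x.
Proof. by move=> xy j lt_jn; rewrite xy. Qed.

Lemma iter_shiftE k x j : iter k (@Defs.shift t) x j = x (j + k)%N.
Proof.
elim: k j => [|k IHk] j; first by rewrite addn0.
by rewrite iterS [in LHS]/Defs.shift IHk addSnnS.
Qed.

Lemma agree_shift k n x y :
  agree (n + k) x y -> agree n (iter k (@Defs.shift t) x) (iter k (@Defs.shift t) y).
Proof. by move=> xy j lt_jn; rewrite !iter_shiftE xy // ltn_add2r. Qed.

Lemma agree_diagonal (zs : nat -> Sig t) :
  (forall k, agree k (zs k) (zs k.+1)) ->
  forall k, agree k (fun j => zs j.+1 j) (zs k).
Proof.
move=> zsS k j lt_jk; elim: k lt_jk => // k IHk.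
rewrite ltnS leq_eqVlt => /orP[/eqP ->|lt_jk]; first by [].
by rewrite IHk // zsS.
Qed.
End Cylinders.

Section Compactness.
Variables (R : realType) (t : nat) (Q : Sig t -> R -> Prop).
Hypothesis Q_mono : forall x r r', Q x r -> r <= r' -> Q x r'.

Let bounded_on k z := exists r, forall y, agree k z y -> Q y r.

Lemma unbounded_extend k z :
  ~ bounded_on k z -> exists z', agree k z z' /\ ~ bounded_on k.+1 z'.
Proof.
move=> unbd; apply: contrapT => no_ext; apply: unbd.
pose z_ (i : 'I_t) : Sig t := fun j => if (j < k)%N then z j else i.
have bd_i i : bounded_on k.+1 (z_ i).
  apply: contrapT => unbd_i; apply: no_ext; exists (z_ i); split => //.
  by move=> j lt_jk; rewrite /z_ lt_jk.
have [r r_bd] := choice bd_i.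
exists (\sum_i `|r i|) => y zy; apply: (Q_mono (r_bd (y k) _ _)).
  move=> j; rewrite ltnS leq_eqVlt => /orP[/eqP ->|lt_jk]; first by rewrite /z_ ltnn.
  by rewrite /z_ lt_jk zy.
by rewrite (bigD1 (y k)) //= ler_wpDr ?sumr_ge0 ?ler_norm.
Qed.

(* Koenig's lemma, i.e. compactness of Sigma. *)
Lemma cylinder_bound_uniform :
  (forall x, exists m r, forall y, agree m x y -> Q y r) -> exists r, forall y, Q y r.
Proof.
move=> local; apply: contrapT => unbd.
have [[y0 _]|Sig0] := pselect (exists y0 : Sig t, True); last first.
  by apply: unbd; exists 0 => y; case: Sig0; exists y.
have ext kz : exists z', ~ bounded_on kz.1 kz.2 ->
    agree kz.1 kz.2 z' /\ ~ bounded_on kz.1.+1 z'.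
  have [bd_k|unbd_k] := pselect (bounded_on kz.1 kz.2); first by exists y0.
  by have [z' ext_k] := unbounded_extend unbd_k; exists z'.
have [f f_ext] := choice ext.
pose zs := fix zs k := if k is k'.+1 then f (k', zs k') else y0.
have zs_unbd k : ~ bounded_on k (zs k) /\ agree k (zs k) (zs k.+1).
  elim: k => [|k [unbd_k _]]; last first.
    have [_ unbd_k1] := f_ext (k, zs k) unbd_k.
    by split; last exact: (proj1 (f_ext (k.+1, zs k.+1) unbd_k1)).
  have unbd_0 : ~ bounded_on 0 y0.
    by move=> [r r_bd]; apply: unbd; exists r => y; apply: r_bd.
  by split; last exact: (proj1 (f_ext (0%N, y0) unbd_0)).
have [m [r r_bd]] := local (fun j => zs j.+1 j).
have zs_lim := agree_diagonal (fun k => proj2 (zs_unbd k)) (k := m).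
by apply: (proj1 (zs_unbd m)); exists r => y zy; apply/r_bd/(agree_trans zs_lim).
Qed.
End Compactness.

Lemma normrM2_le_sqrD (R : realDomainType) (a b : R) : 2 * `|a * b| <= a ^+ 2 + b ^+ 2.
Proof.
rewrite normrM -(real_normK (num_real a)) -(real_normK (num_real b)).
by have := sqr_ge0 (`|a| - `|b|); nra.
Qed.

Section QuadraticForms.
Variables (R : realType) (n : nat).
Implicit Types (v : 'cV[R]_n) (B E : 'M[R]_n).

Lemma dotvE (u v : 'cV[R]_n) : dotv u v = \sum_j u j 0 * v j 0.
Proof. by rewrite /dotv mxE; apply: eq_bigr => j _; rewrite mxE. Qed.

Lemma dotv_sqr v : dotv v v = \sum_j v j 0 ^+ 2.
Proof. by rewrite dotvE; under eq_bigr do rewrite -expr2. Qed.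

Lemma dotv_ge0 v : 0 <= dotv v v.
Proof. by rewrite dotv_sqr sumr_ge0 // => j _; rewrite sqr_ge0. Qed.

Lemma dotv_mulBl v B E : dotv v ((B - E) *m v) = dotv v (B *m v) - dotv v (E *m v).
Proof.
by rewrite !dotvE -sumrB; apply: eq_bigr => j _; rewrite mulmxBl !mxE mulrBr.
Qed.

Definition qform B (u : 'rV[R]_n) : R := \sum_j u 0 j * \sum_l B j l * u 0 l.

Lemma dotv_qform B v : dotv v (B *m v) = qform B v^T.
Proof.
rewrite dotvE /qform; apply: eq_bigr => j _; rewrite !mxE; congr (_ * _).
by apply: eq_bigr => l _; rewrite mxE.
Qed.

Lemma qformZ B k (u : 'rV[R]_n) : qform B (k *: u) = k ^+ 2 * qform B u.
Proof.
rewrite /qform mulr_sumr; apply: eq_bigr => j _; rewrite !mulr_sumr.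
by apply: eq_bigr => l _; rewrite !mxE; ring.
Qed.

Lemma qform_continuous B : continuous (qform B).
Proof.
apply: (@continuous_big _ _ +%R 0 xpredT _ _ (index_enum _)); first exact: add_continuous.
move=> j _ u; apply: continuousM; first exact: coord_continuous.
apply: (@continuous_big _ _ +%R 0 xpredT _ _ (index_enum _)); first exact: add_continuous.
by move=> l _ u'; apply: continuousM; [exact: cst_continuous | exact: coord_continuous].
Qed.

(* A positive form attains a positive minimum on the unit sphere. *)
Lemma positive_coercive B : (forall v, v != 0 -> 0 < dotv v (B *m v)) ->
  exists2 a, 0 < a & forall v, a * dotv v v <= dotv v (B *m v).
Proof.
move=> B_pos; have [n0|n_gt0] := posnP n.
  have no_ord (j : 'I_n) : False by have /leq_trans/(_ (eq_leq n0)) := ltn_ord j.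
  by exists 1 => // v; rewrite !dotvE !big1 ?mulr0 // => j; case: (no_ord j).
pose S := ((@Num.norm _ _) : 'rV[R]_n -> R) @^-1` [set 1].
have S0 : S !=set0.
  have nz : (const_mx 1 : 'rV[R]_n) != 0.
    by apply/eqP => /matrixP /(_ 0 (Ordinal n_gt0)); rewrite !mxE => /eqP; rewrite oner_eq0.
  by exists (`|const_mx 1 : 'rV[R]_n|^-1 *: const_mx 1); rewrite /S /= normfZV.
have S_compact : compact S.
  apply: bounded_closed_compact.
    by exists 1; split => // M lt_1M u; rewrite /S /= => ->; apply: ltW.
  apply: preimage_closed; last exact: closed_eq.
  by move=> x _; apply: norm_continuous.
have [u Su u_min] :=
  EVT_min_rV S0 S_compact (continuous_subspaceT (qform_continuous (B := B))).
move: Su; rewrite inE /S /= => u1.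
have u0 : u != 0 by apply: contra_eq_neq u1 => ->; rewrite normr0 eq_sym oner_neq0.
have qu_gt0 : 0 < qform B u by rewrite -[u]trmxK -dotv_qform B_pos // trmx_eq0.
have q_ge w : qform B u * `|w| ^+ 2 <= qform B w.
  have [->|w0] := eqVneq w 0.
    by rewrite normr0 expr0n /= mulr0 /qform big1 // => j _; rewrite mxE mul0r.
  have -> : qform B w = `|w| ^+ 2 * qform B (`|w|^-1 *: w).
    by rewrite qformZ exprVn mulrA divff ?mul1r // expf_neq0 // normr_eq0.
  by rewrite mulrC; apply: ler_wpM2l; rewrite ?sqr_ge0 // u_min // inE /S /= normfZV.
exists (qform B u / n%:R); first by rewrite divr_gt0 ?ltr0n.
move=> v; rewrite dotv_qform; apply: le_trans (q_ge v^T).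
rewrite mulrAC ler_pdivrMr ?ltr0n // -mulrA; apply: ler_wpM2l; first exact: ltW.
have coord_le j : v j 0 ^+ 2 <= `|v^T| ^+ 2.
  rewrite -real_normK ?num_real // lerXn2r ?nnegrE //.
  rewrite [leRHS]/Num.norm /= mx_normrE; apply/bigmax_geP; right => /=.
  by exists (0, j) => //=; rewrite mxE.
rewrite dotv_sqr; apply: le_trans (ler_sum _ (fun j _ => coord_le j)) _.
by rewrite sumr_const card_ord mulr_natr.
Qed.

Lemma entries_le_quad E v e : (forall j l, `|E j l| <= e) ->
  `|dotv v (E *m v)| <= e * n%:R * dotv v v.
Proof.
move=> E_le; rewrite dotvE; apply: le_trans (ler_norm_sum _ _ _) _.
have -> : e * n%:R * dotv v v = \sum_j \sum_l e / 2 * (v j 0 ^+ 2 + v l 0 ^+ 2).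
  under eq_bigr do rewrite -mulr_sumr big_split /= sumr_const card_ord.
  by rewrite -mulr_sumr big_split /= sumr_const card_ord sumrMnl dotv_sqr; field.
apply: ler_sum => j _; rewrite mxE mulr_sumr; apply: le_trans (ler_norm_sum _ _ _) _.
apply: ler_sum => l _; rewrite mulrCA normrM.
have e0 : 0 <= e := le_trans (normr_ge0 _) (E_le j l).
apply: le_trans (ler_wpM2r (normr_ge0 _) (E_le j l)) _.
rewrite -mulrA [2^-1 * _]mulrC; apply: ler_wpM2l => //.
by rewrite ler_pdivlMr // mulrC normrM2_le_sqrD.
Qed.

End QuadraticForms.

Section ContinuousMatrixFields.
Variables (R : realType) (t n : nat) (A : Sig t -> 'M[R]_n).
Hypothesis A_cont : contS A.

Lemma contS_bounded : exists2 b, 0 <= b & forall x j l, `|A x j l| <= b.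
Proof.
pose Q x b := forall j l, `|A x j l| <= b.
have [b b_bd] : exists b, forall x, Q x b.
  apply: cylinder_bound_uniform => [x b b' b_bd le_bb' j l|x].
    exact: le_trans (b_bd j l) le_bb'.
  have [m near_x] := A_cont x ltr01.
  exists m, (\sum_j \sum_l `|A x j l| + 1) => y xy j l.
  have Ay_le : `|A y j l| <= `|A x j l| + 1.
    by rewrite -lerBlDl (le_trans (lerB_dist _ _)) // ltW // near_x.
  apply: le_trans Ay_le _; rewrite lerD2r.
  rewrite (bigD1 j) //= (bigD1 l) //= -addrA ler_wpDr // addr_ge0 ?sumr_ge0 //.
  by move=> j' _; rewrite sumr_ge0.
exists `|b| => [|x j l]; first exact: normr_ge0.
exact: le_trans (b_bd x j l) (ler_norm b).
Qed.

Lemma contS_coercive : (forall x, posdef (A x)) ->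
  exists2 a, 0 < a & forall x v, a * dotv v v <= dotv v (A x *m v).
Proof.
move=> A_pd.
pose Q x r := 0 < r /\ forall v, r^-1 * dotv v v <= dotv v (A x *m v).
have [r r_coer] : exists r, forall x, Q x r.
  apply: cylinder_bound_uniform => [x r r' [r0 r_coer] le_rr'|x].
    split=> [|v]; first exact: lt_le_trans le_rr'.
    apply: le_trans (r_coer v); apply: ler_wpM2r; first exact: dotv_ge0.
    by rewrite lef_pV2 ?posrE // (lt_le_trans r0).
  have [a a0 a_coer] := positive_coercive (proj2 (A_pd x)).
  have eps0 : 0 < a / (2 * n.+1%:R) by rewrite divr_gt0 // mulr_gt0.
  have [m near_x] := A_cont x eps0.
  exists m, (2 / a) => y xy; split=> [|v]; first by rewrite divr_gt0.
  have diff_le : `|dotv v ((A y - A x) *m v)| <= a / 2 * dotv v v.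
    apply: le_trans (entries_le_quad _ (e := a / (2 * n.+1%:R)) _) _ => [j l|].
      by rewrite !mxE ltW // near_x.
    apply: ler_wpM2r; first exact: dotv_ge0.
    rewrite invfM mulrA -mulrA ler_piMr ?divr_ge0 ?(ltW a0) //.
    by rewrite mulrC ler_pdivrMr ?ltr0n // mul1r ler_nat.
  move: diff_le; rewrite invf_div ler_norml dotv_mulBl => /andP[diff_ge _].
  by have := a_coer v; lra.
have [[x0 _]|no_pt] := pselect (exists x : Sig t, True).
  by exists r^-1 => [|x v]; [rewrite invr_gt0; case: (r_coer x0) | case: (r_coer x)].
by exists 1 => // x; case: no_pt; exists x.
Qed.
End ContinuousMatrixFields.

Lemma holder_geometric (R : realType) t (gam alpha : R) (W : Sig t -> R) :
  0 < gam < 1 -> 0 < alpha -> holder gam alpha W ->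
  exists K r : R, [/\ 0 <= K, 0 < r < 1 &
    forall n x y, agree n x y -> `|W x - W y| <= K * r ^+ n].
Proof.
move=> /andP[gam0 gam1] alpha0 [K W_holder].
exists `|K|, (gam `^ alpha); split => //.
  by rewrite powR_gt0 //= /powR gt_eqF // expR_lt1 pmulr_rlt0 // ln_lt0 // gam0.
move=> n x y xy; apply: le_trans (W_holder n x y xy) _.
have -> : (gam ^+ n) `^ alpha = (gam `^ alpha) ^+ n.
  by rewrite -powR_mulrn ?ltW // -powRrM mulrC powRrM powR_mulrn ?powR_ge0.
by apply: ler_wpM2r; rewrite ?exprn_ge0 ?powR_ge0 ?ler_norm.
Qed.

Section HolderPotentials.
Variables (R : realType) (t : nat) (W : Sig t -> R) (K r : R).
Hypotheses (K0 : 0 <= K) (r_bounds : 0 < r < 1).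
Hypothesis W_holder : forall n x y, agree n x y -> `|W x - W y| <= K * r ^+ n.

Lemma holder_cylinder_cont x eps : 0 < eps ->
  exists m, forall y, agree m x y -> `|W y - W x| < eps.
Proof.
move=> eps0; have /andP[r0 r1] := r_bounds.
have r_norm : `|r| < 1 by rewrite ger0_norm ?ltW.
have /cvgr0_norm_lt/(_ _ (divr_gt0 eps0 (ltr_wpDl K0 ltr01))) [m _ rm_small] :=
  cvg_expr r_norm.
exists m => y xy; apply: le_lt_trans (W_holder (agree_sym xy)) _.
have := rm_small m (leqnn m); rewrite /= ger0_norm ?exprn_ge0 ?ltW //.
rewrite ltr_pdivlMr ?ltr_wpDl // mulrC => rm_lt; apply: le_lt_trans rm_lt.
by apply: ler_wpM2r; [rewrite exprn_ge0 // ltW | rewrite lerDl].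
Qed.

Lemma holder_pos_lb : (forall x, 0 < W x) -> exists2 m0, 0 < m0 & forall x, m0 <= W x.
Proof.
move=> W_pos.
pose Q x s := 0 < s /\ s^-1 <= W x.
have [r' r'_lb] : exists r', forall x, Q x r'.
  apply: cylinder_bound_uniform => [x s s' [s0 s_lb] le_ss'|x].
    split; first exact: lt_le_trans le_ss'.
    by apply: le_trans s_lb; rewrite lef_pV2 ?posrE // (lt_le_trans s0).
  have [m near_x] := holder_cylinder_cont x (divr_gt0 (W_pos x) (ltr0Sn _ 1)).
  exists m, (2 / W x) => y xy; split; first by rewrite divr_gt0.
  by rewrite invf_div; have := near_x y xy; rewrite ltr_norml => /andP[lo _]; lra.
have [[x0 _]|no_pt] := pselect (exists x : Sig t, True).
  by exists r'^-1 => [|x]; [rewrite invr_gt0; case: (r'_lb x0) | case: (r'_lb x)].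
by exists 1 => // x; case: no_pt; exists x.
Qed.

Lemma birk_distortion_le m y z : agree m y z -> `|birk W m y - birk W m z| <= K * r / (1 - r).
Proof.
move=> yz; have /andP[r0 r1] := r_bounds.
rewrite /birk -sumrB; apply: le_trans (ler_norm_sum _ _ _) _.
apply: (@le_trans _ _ (\sum_(j < m) K * r ^+ (m - j))).
  apply: ler_sum => j _; apply: W_holder; apply: agree_shift.
  by rewrite subnK // ltnW.
rewrite -mulr_sumr -mulrA ler_wpM2l //.
rewrite (reindex_inj rev_ord_inj) /=.
under eq_bigr => j _ do rewrite subKn // exprSr mulrC.
have r_norm : `|r| < 1 by rewrite ger0_norm ?ltW.
by have := geometric_le_lim m (ltW r0) r0 r_norm; rewrite seriesEord.
Qed.
End HolderPotentials.

Definition ffun_cons t n (i : 'I_t) (w : {ffun 'I_n -> 'I_t}) : {ffun 'I_n.+1 -> 'I_t} :=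
  [ffun k => if unlift ord0 k is Some k' then w k' else i].

Lemma codom_ffun_cons t n i (w : {ffun 'I_n -> 'I_t}) : codom (ffun_cons i w) = i :: codom w.
Proof.
rewrite !codomE enum_ordSl /= ffunE unlift_none -map_comp; congr (_ :: _).
by apply: eq_map => k /=; rewrite ffunE liftK.
Qed.

Lemma big_ffunS (V : nmodType) t n (F : {ffun 'I_n.+1 -> 'I_t} -> V) :
  \sum_w F w = \sum_i \sum_(w : {ffun 'I_n -> 'I_t}) F (ffun_cons i w).
Proof.
rewrite pair_big /= (reindex (fun p : 'I_t * {ffun 'I_n -> 'I_t} => ffun_cons p.1 p.2)) //.
exists (fun w : {ffun 'I_n.+1 -> 'I_t} => (w ord0, [ffun k => w (lift ord0 k)])).
  move=> [i w] _.
  by rewrite ffunE unlift_none; congr (_, _); apply/ffunP => k; rewrite !ffunE liftK.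
move=> w _; apply/ffunP => k; rewrite ffunE /=.
by case: unliftP => [j ->|->] //; rewrite ffunE.
Qed.

Definition wcons t (s : seq 'I_t) (x : Sig t) : Sig t := foldr (@scons t) x s.

Definition word_mx (R : pzRingType) t N (P : 'I_t -> 'M[R]_N) (s : seq 'I_t) : 'M[R]_N :=
  foldr (fun i M => P i *m M) 1%:M s.

Definition sqfrob (R : pzRingType) N (M : 'M[R]_N) : R := \sum_k \sum_j M j k ^+ 2.

Lemma sqfrob_ge0 (R : realType) N (M : 'M[R]_N) : 0 <= sqfrob M.
Proof. by apply: sumr_ge0 => k _; apply: sumr_ge0 => j _; apply: sqr_ge0. Qed.

Lemma birkS (R : realType) t (W : Sig t -> R) n i x :
  birk W n.+1 (scons i x) = W (scons i x) + birk W n x.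
Proof.
rewrite /birk big_ord_recl /=; congr (_ + _); apply: eq_bigr => j _.
by rewrite -iterS iterSr.
Qed.

Lemma mxtrace_conj_ge (R : realType) N (M B : 'M[R]_N) a :
  (forall v, a * dotv v v <= dotv v (B *m v)) -> a * sqfrob M <= \tr (M^T *m B *m M).
Proof.
move=> B_coer; rewrite /sqfrob mulr_sumr /mxtrace; apply: ler_sum => k _.
have -> : \sum_j M j k ^+ 2 = dotv (col k M) (col k M).
  by rewrite dotv_sqr; apply: eq_bigr => j _; rewrite mxE.
apply: le_trans (B_coer (col k M)) _.
by rewrite /dotv tr_col colE !mulmxA -!row_mul -colE !mxE.
Qed.

Section TransferIterates.
Variables (R : realType) (t N : nat) (P : 'I_t -> 'M[R]_N) (W : Sig t -> R).
Variable A : Sig t -> 'M[R]_N.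
Hypothesis A_fixed : forall x,
  \sum_i expR (W (scons i x)) *: ((P i)^T *m A (scons i x) *m P i) = A x.

Lemma fixed_point_iter n x : A x = \sum_(w : {ffun 'I_n -> 'I_t})
  expR (birk W n (wcons (codom w) x)) *:
    ((word_mx P (codom w))^T *m A (wcons (codom w) x) *m word_mx P (codom w)).
Proof.
elim: n x => [|n IHn] x.
  rewrite (eq_bigr (fun _ => A x)) => [|w _]; last first.
    by rewrite codomE enum_ord0 /birk big_ord0 expR0 scale1r /= trmx1 mul1mx mulmx1.
  by rewrite sumr_const card_ffun !card_ord expn0.
rewrite big_ffunS exchange_big /= [LHS](IHn x); apply: eq_bigr => w _.
rewrite -{1}A_fixed mulmx_sumr mulmx_suml scaler_sumr; apply: eq_bigr => i _.
rewrite codom_ffun_cons /= birkS expRD -scalemxAr -scalemxAl scalerA mulrC.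
by rewrite trmx_mul !mulmxA.
Qed.

Lemma weighted_sqfrob_le a b n x : 0 < a ->
  (forall y v, a * dotv v v <= dotv v (A y *m v)) -> (forall y j l, `|A y j l| <= b) ->
  \sum_(w : {ffun 'I_n -> 'I_t})
    expR (birk W n (wcons (codom w) x)) * sqfrob (word_mx P (codom w)) <= N%:R * b / a.
Proof.
move=> a0 A_coer A_bd; rewrite ler_pdivlMr // mulrC mulr_sumr.
apply: (@le_trans _ _ (\tr (A x))).
  rewrite [X in \tr X](fixed_point_iter n x) raddf_sum /=; apply: ler_sum => w _.
  rewrite mxtraceZ mulrCA; apply: ler_wpM2l; [exact: expR_ge0 | exact: mxtrace_conj_ge].
apply: (@le_trans _ _ (\sum_(k < N) b)); last by rewrite sumr_const card_ord mulr_natl.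
by apply: ler_sum => k _; rewrite (le_trans (ler_norm _)).
Qed.
End TransferIterates.

Section TraceOnSymmetric.
Variables (R : realType) (N : nat).
Implicit Types (M X : 'M[R]_N).

Lemma Sbasis_entry_le (a b k l : 'I_N) : `|Sbasis R a b k l| <= 2.
Proof.
have bool_le (c : bool) : `|c%:R : R| <= 1 by case: c; rewrite ?normr1 ?normr0.
rewrite /Sbasis; case: eqP => _; rewrite !mxE.
  by rewrite (le_trans (bool_le _)) ?ler1n.
by rewrite (le_trans (ler_normD _ _)) // (le_trans (lerD (bool_le _) (bool_le _))).
Qed.

Lemma conj_entry_le M X a b : (forall k l, `|X k l| <= 2) ->
  `|(M *m X *m M^T) a b| <= \sum_k \sum_l (M a k ^+ 2 + M b l ^+ 2).
Proof.
move=> X_le; rewrite mxE; under eq_bigr do rewrite !mxE big_distrl /=.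
rewrite exchange_big /=; apply: le_trans (ler_norm_sum _ _ _) _; apply: ler_sum => k _.
apply: le_trans (ler_norm_sum _ _ _) _; apply: ler_sum => l _.
rewrite -mulrA mulrCA normrM mulrC; apply: le_trans (normrM2_le_sqrD _ _).
by rewrite mulrC; apply: ler_wpM2r.
Qed.

Lemma sum_sqr_pairs (f : 'I_N -> 'I_N -> R) :
  \sum_a \sum_b \sum_k \sum_l (f a k + f b l) = 2 * N%:R ^+ 2 * \sum_a \sum_k f a k.
Proof.
have inner a b : \sum_k \sum_l (f a k + f b l) = N%:R * \sum_k f a k + N%:R * \sum_l f b l.
  under eq_bigr do rewrite big_split /= sumr_const card_ord.
  by rewrite big_split /= sumr_const card_ord sumrMnl !mulr_natl.
under eq_bigr do under eq_bigr do rewrite inner.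
under eq_bigr do rewrite big_split /= sumr_const card_ord -mulr_sumr.
rewrite big_split /= sumr_const card_ord sumrMnl -mulr_sumr.
by set S := \sum_a _; ring.
Qed.

Lemma trM_conj_le M : `|trM (fun X => M *m X *m M^T)| <= 2 * N%:R ^+ 2 * sqfrob M.
Proof.
pose F a b := \sum_k \sum_l (M a k ^+ 2 + M b l ^+ 2).
have F_ge0 a b : 0 <= F a b by do 2!(apply: sumr_ge0 => ? _); rewrite addr_ge0 ?sqr_ge0.
rewrite /trM; apply: le_trans (ler_norm_sum _ _ _) _.
apply: (@le_trans _ _ (\sum_a \sum_b F a b)).
  apply: ler_sum => a _; apply: le_trans (ler_norm_sum _ _ _) _.
  have sub_le : \sum_(b < N | (a <= b)%N) F a b <= \sum_b F a b.
    by rewrite [leRHS](bigID (fun b : 'I_N => (a <= b)%N)) /= lerDl sumr_ge0.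
  by apply: le_trans sub_le; apply: ler_sum => b _; apply/conj_entry_le/Sbasis_entry_le.
by rewrite /F sum_sqr_pairs /sqfrob [X in _ <= _ * X]exchange_big.
Qed.
End TraceOnSymmetric.

Lemma tPsi_wordE (R : realType) t d q (psi : 'I_t -> 'cV[R]_d -> 'cV[R]_d) s X :
  let P i := pullmx q (Dmat (psi i)) in
  @tPsi_word R t d q psi s X = word_mx P s *m X *m (word_mx P s)^T.
Proof.
elim: s X => [|i s IHs] X /=; first by rewrite trmx1 mul1mx mulmx1.
by rewrite IHs /tPsi trmx_mul !mulmxA.
Qed.

Lemma perpt_agree t n (w : {ffun 'I_n.+1 -> 'I_t}) x :
  agree n.+1 (perpt w) (wcons (codom w) x).
Proof.
have wcons_nth (s : seq 'I_t) j : (j < size s)%N -> wcons s x j = nth (w ord0) s j.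
  by elim: s j => [|i s IHs] [|j] //= /IHs.
move=> j lt_jn; rewrite wcons_nth ?size_codom ?card_ord // codomE.
rewrite (nth_map ord0) ?size_enum_ord // /perpt modn_small //.
by congr (w _); apply: val_inj; rewrite /= nth_enum_ord // inordK.
Qed.

Lemma ln_mul_le_powR (R : realType) (k e y : R) : 0 < k -> 0 < e -> 0 < y ->
  ln y / k * y <= (e * k)^-1 * y `^ (1 + e).
Proof.
move=> k0 e0 y0.
have -> : y `^ (1 + e) = y `^ e * y.
  rewrite powRD; first by rewrite mulrC; congr (_ * _); apply/powRr1/ltW.
  by apply/implyP => _; rewrite gt_eqF.
rewrite mulrA ler_pM2r // invfM mulrAC ler_pM2r ?invr_gt0 // mulrC ler_pdivlMr //.
by rewrite mulrC -ln_powR ltW // ln_sublinear // powR_gt0.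
Qed.

Lemma birk_lb (R : realType) t (V : Sig t -> R) m n x :
  (forall y, m <= V y) -> m * n%:R <= birk V n x.
Proof.
move=> V_ge; rewrite mulr_natr -[n in m *+ n]card_ord -sumr_const.
by apply: ler_sum => j _.
Qed.

Section PeriodicOrbitCount.
Variables (R : realType) (t d q : nat) (psi : 'I_t -> 'cV[R]_d -> 'cV[R]_d).
Variables (Vh : Sig t -> R) (c : R) (A : Sig t -> 'M[R]_(dimL d q)) (a b D m0 : R).
Let P i := pullmx q (Dmat (psi i)).
Let N := dimL d q.
Hypothesis A_fixed : forall x,
  \sum_i expR (- c * Vh (scons i x)) *: ((P i)^T *m A (scons i x) *m P i) = A x.
Hypotheses (a_gt0 : 0 < a) (A_coer : forall x v, a * dotv v v <= dotv v (A x *m v)).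
Hypotheses (b_ge0 : 0 <= b) (A_bd : forall x j l, `|A x j l| <= b).
Hypothesis Vh_distortion : forall m y z, agree m y z -> `|birk Vh m y - birk Vh m z| <= D.
Hypotheses (m0_gt0 : 0 < m0) (Vh_ge : forall x, m0 <= Vh x).

Let V x := `|c| * Vh x.

(* 2 N^2 comes from [trM_conj_le], N b / a from [weighted_sqfrob_le] and
   e^(|c| D) from the distortion between a periodic point and [wcons w x]. *)
Let orbit_bound := 2 * N%:R ^+ 2 * expR (`|c| * D) * (N%:R * b / a).

Lemma orbit_weight_ge1 n (w : {ffun 'I_n.+1 -> 'I_t}) x y :
  expR (birk V n.+1 (perpt w)) <= y ->
  1 <= y * (expR (`|c| * D) * expR (birk (fun x => - c * Vh x) n.+1 (wcons (codom w) x))).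
Proof.
rewrite /V /birk -!mulr_sumr -!/(birk _ _ _) => wy.
have dist := Vh_distortion (perpt_agree w x).
have Bc_ge0 : 0 <= birk Vh n.+1 (wcons (codom w) x).
  by apply: le_trans (birk_lb _ _ Vh_ge); rewrite mulr_ge0 ?ltW.
apply: le_trans (ler_wpM2r _ wy); last by rewrite mulr_ge0 ?expR_ge0.
rewrite -!expRD -expR0 ler_expR.
have := ler_norm c; have := normr_ge0 c; move: dist; rewrite ler_distlC => /andP[_ dist].
nra.
Qed.

Lemma orbit_term_le n y : 1 <= y ->
  orbit_term q psi V y n <= orbit_bound * y.
Proof.
move=> y1; have y0 : 0 <= y := le_trans ler01 y1.
set C := 2 * N%:R ^+ 2 * expR (`|c| * D) * y.
have C0 : 0 <= C by rewrite !mulr_ge0 ?expR_ge0.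
have Nba0 : 0 <= N%:R * b / a by rewrite !mulr_ge0 ?invr_ge0 ?(ltW a_gt0).
rewrite /orbit_term; set S := \sum_(w | _) _.
suff S_le : S <= C * (N%:R * b / a).
  rewrite /orbit_bound mulrAC -/C; apply: le_trans (ler_wpM2l _ S_le) _; first by rewrite invr_ge0.
  have inv_le1 : n.+1%:R^-1 <= 1 :> R by rewrite invf_le1 ?ltr0Sn // ler1n.
  by rewrite ler_piMl // mulr_ge0.
have [[x _]|no_pt] := pselect (exists x : Sig t, True); last first.
  rewrite /S big_pred0 => [|w]; first exact: mulr_ge0.
  by case: no_pt; exists (perpt w).
pose G (w : {ffun 'I_n.+1 -> 'I_t}) :=
  expR (birk (fun x => - c * Vh x) n.+1 (wcons (codom w) x)) * sqfrob (word_mx P (codom w)).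
apply: (@le_trans _ _ (\sum_w C * G w)); last first.
  by rewrite -mulr_sumr; apply: ler_wpM2l => //; apply: weighted_sqfrob_le.
rewrite /S big_mkcond /=; apply: ler_sum => w _.
case: ifPn => [/andP[_ wy]|_]; last by rewrite !mulr_ge0 ?expR_ge0 ?sqfrob_ge0.
rewrite (funext (tPsi_wordE psi (codom w))).
apply: le_trans (ler_norm _) _; apply: le_trans (trM_conj_le _) _.
have := orbit_weight_ge1 x wy; rewrite /C /G.
set F := sqfrob _; set E := expR (birk _ _ _) => weight_ge1.
have -> : 2 * N%:R ^+ 2 * expR (`|c| * D) * y * (E * F) =
    2 * N%:R ^+ 2 * F * (y * (expR (`|c| * D) * E)) by ring.
by apply: ler_peMr; rewrite ?mulr_ge0 ?sqfrob_ge0.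
Qed.

Lemma orbit_term_eq0 n y :
  0 < y -> ln y < `|c| * m0 * n.+1%:R -> orbit_term q psi V y n = 0.
Proof.
move=> y0 long_n; rewrite /orbit_term big_pred0 ?mulr0 // => w.
apply/negbTE; rewrite negb_and -ltNge; apply/orP; right.
rewrite -[y]lnK ?posrE // ltr_expR (lt_le_trans long_n) //.
rewrite /V /birk -mulr_sumr -/(birk _ _ _).
by rewrite -mulrA; apply: ler_wpM2l => //; apply: birk_lb.
Qed.

Lemma piV_le y : 1 <= y -> c != 0 ->
  piV q psi V y <= ln y / (`|c| * m0) * (orbit_bound * y).
Proof.
move=> y1 c0; have y0 : 0 < y := lt_le_trans ltr01 y1.
have cm0 : 0 < `|c| * m0 by rewrite mulr_gt0 ?normr_gt0.
set X := ln y / (`|c| * m0).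
have -> : piV q psi V y = \sum_(n < Num.truncn X) orbit_term q psi V y n.
  rewrite /piV fsbig_ord; apply/esym/fsbig_widen => // n [_ /= n_ge].
  apply: orbit_term_eq0 => //; rewrite mulrC -(ltr_pdivrMr _ _ cm0).
  by apply: lt_le_trans (truncnS_gt X) _; rewrite ler_nat ltnS leqNgt; apply/negP.
set K := _ * y.
apply: (@le_trans _ _ (\sum_(n < Num.truncn X) K)).
  by apply: ler_sum => n _; apply: orbit_term_le.
rewrite sumr_const card_ord -mulr_natl; apply: ler_wpM2r.
  by rewrite /K /orbit_bound !mulr_ge0 ?expR_ge0 ?sqr_ge0 ?invr_ge0 ?(ltW a_gt0) ?(ltW y0).
by rewrite truncn_le /X divr_ge0 ?ln_ge0 // ltW.
Qed.
End PeriodicOrbitCount.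

Unset Implicit Arguments.

Theorem lemma4p4 (R : realType) (t d q : nat) (gam alpha : R)
    (psi : 'I_t -> 'cV[R]_d -> 'cV[R]_d) (Vh : Sig t -> R) (c : R) :
  0 < gam < 1 -> 0 < alpha ->
  (1 <= q <= d)%N ->
  (forall i, affine_bij (psi i)) ->
  (exists kappa : R, kappa < 1 /\ forall i u v,
      enorm (psi i u - psi i v) <= kappa * enorm (u - v)) ->
  (* (ND_q) *)
  (exists g2 : R, 0 < g2 /\ forall c0 e : 'cV[R]_(dimL d q), exists i : 'I_t,
      `|dotv (pullmx q (Dmat (psi i)) *m c0) e| >= g2 * enorm c0 * enorm e) ->
  holder gam alpha Vh ->
  (forall x, 0 < Vh x) ->
  c != 0 ->
  pressure_is q psi (fun x => - c * Vh x) 0 ->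
  forall gam' : R, 1 < gam' ->
    exists C : R, \forall y \near +oo,
      piV q psi (fun x => `|c| * Vh x) y / y `^ gam' <= C.
Proof.
(* The hypotheses on psi serve in the paper to construct the positive
   eigenfunction, which [pressure_is] already provides. *)
move=> gam_bd alpha_gt0 _ _ _ _ Vh_holder Vh_pos c_neq0 [A [A_cont [A_pd A_eigen]]].
move=> gam' gam'_gt1.
have A_fixed x : \sum_i expR (- c * Vh (scons i x)) *:
    ((pullmx q (Dmat (psi i)))^T *m A (scons i x) *m pullmx q (Dmat (psi i))) = A x.
  by have := A_eigen x; rewrite /transfer expR0 scale1r.
have [a a_gt0 A_coer] := contS_coercive A_cont A_pd.
have [b b_ge0 A_bd] := contS_bounded A_cont.
have [K [r [K_ge0 r_bd Vh_geom]]] := holder_geometric gam_bd alpha_gt0 Vh_holder.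
have [m0 m0_gt0 Vh_ge] := holder_pos_lb K_ge0 r_bd Vh_geom Vh_pos.
have := piV_le A_fixed a_gt0 A_coer b_ge0 A_bd (birk_distortion_le K_ge0 r_bd Vh_geom) m0_gt0 Vh_ge.
set B := _ * (_ / a) => piV_le_y.
have cm0_gt0 : 0 < `|c| * m0 by rewrite mulr_gt0 ?normr_gt0.
have e_gt0 : 0 < gam' - 1 by rewrite subr_gt0.
exists (B * ((gam' - 1) * (`|c| * m0))^-1); exists 1; split => // y y_gt1.
have y_gt0 : 0 < y := lt_trans ltr01 y_gt1.
rewrite ler_pdivrMr ?powR_gt0 //; apply: le_trans (piV_le_y y (ltW y_gt1) c_neq0) _.
have := ln_mul_le_powR cm0_gt0 e_gt0 y_gt0; rewrite addrCA subrr addr0 => growth.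
rewrite mulrCA -[leRHS]mulrA; apply: ler_wpM2l growth.
by rewrite /B !mulr_ge0 ?expR_ge0 ?sqr_ge0 ?invr_ge0 ?(ltW a_gt0).
Qed.
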